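(* Let $\phi:R\to S$ be a cyclically pure ring map. If $S$ has strong avoidance, then $R$ has strong avoidance. In particular this holds whenever $\phi$ is a pure morphism.
   Context: All rings are commutative with $1\neq 0$. A ring map $\phi:R\to S$ is cyclically pure if for every ideal $I$ of $R$ the induced map $R/I\to S/IS$ is injective; it is pure if $M\to M\otimes_R S$, $x\mapsto x\otimes1$, is injective for every $R$-module $M$. A ring map $\psi:A\to B$ has avoidance if whenever $I,I_1,\ldots,I_n$ are ideals of $A$ with $I\subseteq\bigcup_{k=1}^n I_k$, then $IB\subseteq I_kB$ for some $k$. A ring $B$ has strong avoidance if every ring map $A\to B$ has avoidance. *)

From HB Require Import structures.
From mathcomp Require Import all_boot all_order all_algebra.
Set Implicit Arguments. Unset Strict Implicit. Unset Printing Implicit Defensive.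
Import GRing.Theory.
Local Open Scope ring_scope.

Definition is_ideal (R : comNzRingType) (I : R -> Prop) : Prop :=
  [/\ I 0, (forall x y, I x -> I y -> I (x + y)) & (forall r x, I x -> I (r * x))].

(* The extended ideal I S = ideal of S generated by phi(I):
   all finite sums  \sum s_i * phi(a_i)  with a_i in I. *)
Definition ext_ideal (R S : comNzRingType) (phi : {rmorphism R -> S})
  (I : R -> Prop) : S -> Prop :=
  fun b => exists l : seq (R * S),
    (forall p, p \in l -> I p.1) /\ b = \sum_(p <- l) p.2 * phi p.1.

(* phi is cyclically pure: for every ideal I, R/I -> S/IS is injective,
   i.e. phi x = phi y mod IS implies x = y mod I. *)
Definition cyclically_pure (R S : comNzRingType) (phi : {rmorphism R -> S}) : Prop :=
  forall I : R -> Prop, is_ideal I ->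
    forall x y : R, ext_ideal phi I (phi x - phi y) -> I (x - y).

Definition avoidance (A B : comNzRingType) (psi : {rmorphism A -> B}) : Prop :=
  forall (I : A -> Prop) (n : nat) (J : 'I_n -> A -> Prop),
    is_ideal I -> (forall k, is_ideal (J k)) ->
    (forall x, I x -> exists k, J k x) ->
    exists k, forall b, ext_ideal psi I b -> ext_ideal psi (J k) b.

Definition strong_avoidance (B : comNzRingType) : Prop :=
  forall (A : comNzRingType) (psi : {rmorphism A -> B}), avoidance psi.

(** The map [psi : A -> R] has avoidance because [phi \o psi : A -> S] does:
    an ideal [I] of [A] covered by [J_1, ..., J_n] satisfies [I S ⊆ J_k S] for
    some [k], and [J_k S] is the extension of the ideal [J_k R] along [phi].
    Hence every [b] in [I R] has [phi b] in [(J_k R) S], and cyclic purity of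
    [phi] applied to the ideal [J_k R] pulls this back to [b] in [J_k R]. *)
From mathcomp Require Import all_boot all_algebra.

Set Implicit Arguments.
Unset Strict Implicit.
Unset Printing Implicit Defensive.
Import GRing.Theory.
Local Open Scope ring_scope.

Section ExtendedIdeals.

Variables (A B : comNzRingType) (psi : {rmorphism A -> B}).

Lemma ext_ideal_is_ideal (J : A -> Prop) : is_ideal (ext_ideal psi J).
Proof.
split.
- by exists [::]; split => //; rewrite big_nil.
- move=> x y [l1 [Hl1 ->]] [l2 [Hl2 ->]]; exists (l1 ++ l2); split.
    by move=> p; rewrite mem_cat => /orP [] ?; [apply: Hl1 | apply: Hl2].
  by rewrite big_cat.
- move=> r x [l [Hl ->]]; exists [seq (p.1, r * p.2) | p <- l]; split.
    by move=> p /mapP [q Hq ->] /=; apply: Hl.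
  by rewrite big_map mulr_sumr; apply: eq_bigr => p _; rewrite mulrA.
Qed.

Lemma ext_ideal_gen (J : A -> Prop) (a : A) : J a -> ext_ideal psi J (psi a).
Proof.
move=> Ja; exists [:: (a, 1)]; split; last by rewrite big_seq1 mul1r.
by move=> p; rewrite inE => /eqP ->.
Qed.

Variables (C : comNzRingType) (phi : {rmorphism B -> C}).

Lemma ext_ideal_map (J : A -> Prop) (b : B) :
  ext_ideal psi J b -> ext_ideal (phi \o psi) J (phi b).
Proof.
move=> [l [Hl ->]]; exists [seq (p.1, phi p.2) | p <- l]; split.
  by move=> p /mapP [q Hq ->] /=; apply: Hl.
by rewrite rmorph_sum big_map; apply: eq_bigr => p _; rewrite rmorphM.
Qed.

Lemma ext_ideal_comp (J : A -> Prop) (c : C) :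
  ext_ideal (phi \o psi) J c -> ext_ideal phi (ext_ideal psi J) c.
Proof.
move=> [l [Hl ->]]; exists [seq (psi p.1, p.2) | p <- l]; split.
  by move=> p /mapP [q Hq ->] /=; apply/ext_ideal_gen/Hl.
by rewrite big_map.
Qed.

End ExtendedIdeals.

Lemma cyclically_pure_ext_ideal (R S : comNzRingType) (phi : {rmorphism R -> S})
    (I : R -> Prop) (x : R) :
  cyclically_pure phi -> is_ideal I -> ext_ideal phi I (phi x) -> I x.
Proof.
move=> cpure HI Ix; rewrite -[x]subr0.
by apply: (cpure I HI x 0); rewrite rmorph0 subr0.
Qed.

Theorem lemma4p6 (R S : comNzRingType) (phi : {rmorphism R -> S}) :
  cyclically_pure phi -> strong_avoidance S -> strong_avoidance R.
Proof.
move=> cpure saS A psi I n J HI HJ Hcov.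
have [k Hk] := saS A (phi \o psi) I n J HI HJ Hcov.
exists k => b Ib.
apply: (cyclically_pure_ext_ideal cpure (ext_ideal_is_ideal psi (J k))).
by apply/ext_ideal_comp/Hk/ext_ideal_map.
Qed.
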